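(* Let $(K,v)$ be an extremal valued field with value group $\Gamma$. Then $\Gamma$ is divisible or a $\mathbb{Z}$-group.
   Context: $(K,v)$ with valuation ring $\mathcal{O}_v$ and value group $\Gamma$ (and $v(0)=\infty$) is extremal if for every $n\ge1$ and every $F\in K[X_1,\dots,X_n]$ the set $\{v(F(a_1,\dots,a_n)) : a_i\in\mathcal{O}_v\}\subseteq\Gamma\cup\{\infty\}$ has a maximal element. An ordered abelian group is regular if for every $n\ge1$ every open interval containing at least $n$ elements contains an $n$-divisible element; a $\mathbb{Z}$-group is a regular ordered abelian group with a smallest positive element. *)

From HB Require Import structures.
From mathcomp Require Import all_boot all_order all_algebra.
Set Implicit Arguments. Unset Strict Implicit. Unset Printing Implicit Defensive.
Import Order.TTheory GRing.Theory Num.Theory.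
Local Open Scope ring_scope.

Definition ordered_abelian_group (G : porderZmodType) : Prop :=
  (forall x y : G, x <= y \/ y <= x) /\
  (forall x y z : G, x <= y -> x + z <= y + z).

(* Gamma ∪ {∞}, encoded as option G with None = ∞ (the top element). *)
Definition ole (G : porderZmodType) (a b : option G) : Prop :=
  match b with
  | None => True
  | Some y => match a with None => False | Some x => x <= y end
  end.

Definition oadd (G : porderZmodType) (a b : option G) : option G :=
  match a, b with Some x, Some y => Some (x + y) | _, _ => None end.

Definition is_valuation (K : fieldType) (G : porderZmodType)
    (v : K -> option G) : Prop :=
  (forall x, v x = None <-> x = 0) /\
  (forall x y, v (x * y) = oadd (v x) (v y)) /\
  (forall x y, ole (v x) (v (x + y)) \/ ole (v y) (v (x + y))) /\
  (forall g : G, exists x, v x = Some g).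

Definition in_val_ring (K : fieldType) (G : porderZmodType)
    (v : K -> option G) (x : K) : Prop := ole (Some 0) (v x).

(* Polynomials in K[X_1,...,X_n], as finite lists of terms
   (coefficient, exponent vector); every polynomial is of this form. *)
Definition mpoly (K : fieldType) (n : nat) := seq (K * n.-tuple nat).

Definition meval (K : fieldType) (n : nat) (F : mpoly K n) (a : 'I_n -> K) : K :=
  \sum_(m <- F) m.1 * \prod_(i < n) a i ^+ tnth m.2 i.

Definition extremal (K : fieldType) (G : porderZmodType)
    (v : K -> option G) : Prop :=
  forall (n : nat), (0 < n)%N -> forall F : mpoly K n,
    exists a : 'I_n -> K, (forall i, in_val_ring v (a i)) /\
      forall b : 'I_n -> K, (forall i, in_val_ring v (b i)) ->
        ole (v (meval F b)) (v (meval F a)).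

Definition n_divisible (G : porderZmodType) (n : nat) (x : G) : Prop :=
  exists y : G, x = y *+ n.

Definition divisible_group (G : porderZmodType) : Prop :=
  forall n : nat, (0 < n)%N -> forall x : G, n_divisible n x.

Definition regular_group (G : porderZmodType) : Prop :=
  forall n : nat, (0 < n)%N -> forall a b : G,
    (exists s : seq G, uniq s /\ size s = n /\ forall x, x \in s -> a < x < b) ->
    exists x : G, a < x < b /\ n_divisible n x.

Definition Z_group (G : porderZmodType) : Prop :=
  regular_group G /\
  exists e : G, 0 < e /\ forall x : G, 0 < x -> e <= x.

From HB Require Import structures.
From mathcomp Require Import all_boot all_order all_algebra.
From Stdlib Require Import Classical.
Set Implicit Arguments. Unset Strict Implicit. Unset Printing Implicit Defensive.
Import Order.TTheory GRing.Theory Num.Theory.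
Local Open Scope ring_scope.

(* Suppose G is not n-divisible; pick g > 0 that is not n-divisible and pi
   with v(pi) = g.  For th >= 0, take v(s) = th and c = (s pi)^-1: the value of
   x^n + pi (c (x^n y - s))^n is the minimum of n v(x) and g + n (...), which
   never coincide.  Comparing this value at a maximizing point of O_v^2 with its
   values at (1, s) and (x, s / x^n) shows that among the a >= 0 with n a <= th
   there is one with n a largest (an "n-floor" of th).  Since g - n a > 0 for
   the n-floor a of g, arbitrarily small positive elements would let a grow, so
   G has a least positive element e; then for every m > 0 the m-floor of
   a + m e is an m-divisible element in every interval holding m elements above
   a: G is regular. *)

Section OrderedAbelianGroup.
Variable G : porderZmodType.
Hypothesis hG : ordered_abelian_group G.
Implicit Types x y z : G.

Lemma oag_lerD2r x y z : x <= y -> x + z <= y + z.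
Proof. exact: hG.2. Qed.

Lemma oag_lerD2l x y z : x <= y -> z + x <= z + y.
Proof. by rewrite ![z + _]addrC; apply: oag_lerD2r. Qed.

Lemma oag_lerD x y z t : x <= y -> z <= t -> x + z <= y + t.
Proof. by move=> /(oag_lerD2r z) xy /(oag_lerD2l y); apply: le_trans. Qed.

Lemma oag_ltrD2r x y z : x < y -> x + z < y + z.
Proof.
rewrite !lt_def => /andP[yx xy]; rewrite oag_lerD2r // andbT.
by apply: contra yx => /eqP/addIr ->.
Qed.

Lemma oag_ltrD2l x y z : x < y -> z + x < z + y.
Proof. by rewrite ![z + _]addrC; apply: oag_ltrD2r. Qed.

Lemma oag_subr_ge0 x y : (0 <= y - x) = (x <= y).
Proof.
apply/idP/idP => [/(oag_lerD2r x)|/(oag_lerD2r (- x))]; last by rewrite subrr.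
by rewrite add0r subrK.
Qed.

Lemma oag_subr_gt0 x y : (0 < y - x) = (x < y).
Proof.
apply/idP/idP => [/(oag_ltrD2r x)|/(oag_ltrD2r (- x))]; last by rewrite subrr.
by rewrite add0r subrK.
Qed.

Lemma oag_ltrN2 x y : x < y -> - y < - x.
Proof. by move=> xy; rewrite -oag_subr_gt0 opprK addrC oag_subr_gt0. Qed.

Lemma oag_ltNge x y : (x < y) = ~~ (y <= x).
Proof.
case: (hG.1 x y) => [xy|yx]; last by rewrite yx le_gtF.
by rewrite lt_neqAle eq_le xy andbT.
Qed.

Lemma oag_ltgtP x y : [\/ x < y, x = y | y < x].
Proof.
case: (eqVneq x y) => [->|xy]; first exact: Or32.
case: (hG.1 x y) => [le|ge]; first by apply: Or31; rewrite lt_neqAle xy.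
by apply: Or33; rewrite lt_neqAle eq_sym xy.
Qed.

Lemma oag_mulrn_ge0 x k : 0 <= x -> 0 <= x *+ k.
Proof.
by move=> x0; elim: k => [|k IH]; rewrite ?mulr0n // mulrS -[0]add0r oag_lerD.
Qed.

Lemma oag_mulrn_gt0 x k : 0 < x -> (0 < k)%N -> 0 < x *+ k.
Proof.
case: k => // k x0 _; rewrite mulrS -[0]addr0.
exact: lt_le_trans (oag_ltrD2r _ x0) (oag_lerD2l _ (oag_mulrn_ge0 _ (ltW x0))).
Qed.

Lemma oag_lerMn2r x y k : x <= y -> x *+ k <= y *+ k.
Proof.
by move=> xy; elim: k => [|k IH]; rewrite ?mulr0n // !mulrS oag_lerD.
Qed.

Lemma exists_pos_ndiv n x : ~ n_divisible n x ->
  exists2 y : G, 0 < y & ~ n_divisible n y.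
Proof.
move=> xn; case: (oag_ltgtP x 0) => [x_lt0|x0|x_gt0]; last by exists x.
- exists (- x); first by rewrite -oppr0 oag_ltrN2.
  by case=> y ey; apply: xn; exists (- y); rewrite mulNrn -ey opprK.
- by case: xn; exists 0; rewrite x0 mul0rn.
Qed.

Definition nmul_floor (n : nat) : Prop :=
  forall th : G, 0 <= th -> exists a : G, [/\ 0 <= a, a *+ n <= th &
    forall b : G, 0 <= b -> b *+ n <= th -> b *+ n <= a *+ n].

Lemma nmul_floor_ltrD n th a d : (0 < n)%N -> 0 <= a -> 0 < d ->
  (forall b : G, 0 <= b -> b *+ n <= th -> b *+ n <= a *+ n) ->
  th < (a + d) *+ n.
Proof.
move=> n_gt0 a_ge0 d_gt0 a_max.
have ad_ge0 : 0 <= a + d by rewrite -[0]addr0; exact: oag_lerD a_ge0 (ltW d_gt0).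
rewrite oag_ltNge; apply/negP => /(a_max _ ad_ge0).
rewrite mulrnDl; apply/negP; rewrite -oag_ltNge.
by rewrite -{1}[a *+ n]addr0; apply/oag_ltrD2l/oag_mulrn_gt0.
Qed.

Lemma nmul_floor_bracket n e : (0 < n)%N -> 0 < e -> nmul_floor n ->
  forall th : G, exists a : G, a *+ n <= th < a *+ n + e *+ n.
Proof.
move=> n_gt0 e_gt0 floor_n th.
have [b shift_ge0] : exists b : G, 0 <= th + b *+ n.
  case: (hG.1 0 th) => [th_ge0|th_le0]; first by exists 0; rewrite mul0rn addr0.
  exists (- th); rewrite mulNrn oag_subr_ge0.
  case: n n_gt0 {floor_n} => // k _; rewrite mulrS -{3}[th]addr0.
  by apply: oag_lerD2l; rewrite -(mul0rn _ k); apply: oag_lerMn2r.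
have [a [a_ge0 a_le a_max]] := floor_n _ shift_ge0.
exists (a - b); rewrite mulrnBl; apply/andP; split.
  by have := oag_lerD2r (- (b *+ n)) a_le; rewrite addrK.
have := oag_ltrD2r (- (b *+ n)) (nmul_floor_ltrD n_gt0 a_ge0 e_gt0 a_max).
by rewrite addrK mulrnDl addrAC.
Qed.

Section DenseAtZero.
Hypothesis dense0 : forall e : G, 0 < e -> exists2 x : G, 0 < x & x < e.

Lemma oag_halve e : 0 < e -> exists2 d : G, 0 < d & d + d <= e.
Proof.
move=> e_gt0; have [x x_gt0 x_lt] := dense0 e_gt0.
case: (hG.1 (x + x) e) => [xx_le|e_le]; first by exists x.
exists (e - x); first by rewrite oag_subr_gt0.
rewrite -{3}[e](subrK x); apply: oag_lerD2l.
by have := oag_lerD2r (- x) e_le; rewrite addrK.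
Qed.

Lemma oag_small_mulrn k e : 0 < e -> exists2 d : G, 0 < d & d *+ k.+1 <= e.
Proof.
elim: k e => [|k IH] e e_gt0; first by exists e; rewrite ?mulr1n.
have [d d_gt0 dd_le] := oag_halve e_gt0.
have [f f_gt0 fk_le] := IH _ d_gt0; exists f => //.
have f_le : f <= d.
  apply: le_trans fk_le; rewrite mulrS -{1}[f]addr0.
  exact/oag_lerD2l/oag_mulrn_ge0/ltW.
by rewrite mulrS; apply: le_trans dd_le; apply: oag_lerD.
Qed.

End DenseAtZero.

Lemma nmul_floor_least_pos n x : (0 < n)%N -> ~ n_divisible n x ->
  nmul_floor n -> exists e : G, 0 < e /\ forall y : G, 0 < y -> e <= y.
Proof.
move=> n_gt0 xn floor_n; have [g g_gt0 gn] := exists_pos_ndiv xn.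
apply: NNPP => no_least.
have dense0 : forall e : G, 0 < e -> exists2 y : G, 0 < y & y < e.
  move=> e e_gt0; apply: NNPP => no_below; apply: no_least; exists e.
  split=> // y y_gt0; case: (hG.1 e y) => // y_le; case: (eqVneq y e) => [->//|ye].
  by case: no_below; exists y; rewrite // lt_neqAle ye.
have [a [a_ge0 a_le a_max]] := floor_n _ (ltW g_gt0).
have rem_gt0 : 0 < g - a *+ n.
  by rewrite oag_subr_gt0 lt_neqAle a_le andbT; apply/eqP => ga; apply: gn; exists a.
case: n n_gt0 {xn gn floor_n} a_le a_max rem_gt0 => // k _ a_le a_max rem_gt0.
have [d d_gt0 dk_le] := oag_small_mulrn dense0 k rem_gt0.
have := nmul_floor_ltrD (ltn0Sn k) a_ge0 d_gt0 a_max; rewrite mulrnDl.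
by have := oag_lerD2l (a *+ k.+1) dk_le; rewrite subrKC oag_ltNge => ->.
Qed.

Section Discrete.
Variable e : G.
Hypothesis e_min : forall x : G, 0 < x -> e <= x.

Lemma discrete_between a x k : a < x -> x < a + e *+ k ->
  exists2 j, (0 < j < k)%N & x = a + e *+ j.
Proof.
move=> ax; elim: k => [|k IH] x_lt.
  by move: (lt_trans ax x_lt); rewrite mulr0n addr0 ltxx.
case: (oag_ltgtP x (a + e *+ k)) => [/IH [j /andP[j_gt0 jk] ->]|x_eq|x_gt].
- by exists j; rewrite // j_gt0 ltnW.
- case: k {IH x_lt} x_eq => [|k] x_eq.
    by move: ax; rewrite x_eq mulr0n addr0 ltxx.
  by exists k.+1; rewrite /= ?ltnSn.
- have := @e_min (x - (a + e *+ k)); rewrite oag_subr_gt0 => /(_ x_gt).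
  move=> /(oag_lerD2r (a + e *+ k)); rewrite subrK addrCA -mulrS => x_ge.
  by have := le_lt_trans x_ge x_lt; rewrite ltxx.
Qed.

Lemma uniq_gt_has_far a (s : seq G) : (0 < size s)%N -> uniq s ->
  (forall x, x \in s -> a < x) ->
  exists2 x, x \in s & a + e *+ size s <= x.
Proof.
move=> s_gt0 s_uniq s_gt; apply: NNPP => no_far.
have near : {subset s <= [seq a + e *+ j | j <- iota 1 (size s).-1]}.
  move=> x xs; have x_lt : x < a + e *+ size s.
    by rewrite oag_ltNge; apply/negP => x_ge; apply: no_far; exists x.
  have [j /andP[j_gt0 j_lt] ->] := discrete_between (s_gt _ xs) x_lt.
  by apply: map_f; rewrite mem_iota j_gt0 add1n prednK // (leq_ltn_trans _ j_lt).
have := uniq_leq_size s_uniq near; rewrite size_map size_iota.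
by case: (size s) s_gt0 => // m _; rewrite ltnn.
Qed.

End Discrete.

Lemma regular_of_nmul_floor e : 0 < e -> (forall x : G, 0 < x -> e <= x) ->
  (forall n, (0 < n)%N -> (forall x : G, n_divisible n x) \/ nmul_floor n) ->
  regular_group G.
Proof.
move=> e_gt0 e_min floors m m_gt0 a b [s [s_uniq [s_size s_in]]].
case: (floors m m_gt0) => [all_div|floor_m].
  case: s s_size s_uniq s_in => [|x s] s_size _ s_in; first by rewrite -s_size in m_gt0.
  by exists x; split; [apply: s_in; rewrite inE eqxx | apply: all_div].
have s_gt x : x \in s -> a < x by case/s_in/andP.
have s_gt0 : (0 < size s)%N by rewrite s_size.
have [x xs] := uniq_gt_has_far e_min s_gt0 s_uniq s_gt; rewrite s_size => x_ge.
have [c /andP[c_le c_gt]] := nmul_floor_bracket m_gt0 e_gt0 floor_m (a + e *+ m).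
exists (c *+ m); split; last by exists c.
apply/andP; split; first by have := oag_ltrD2r (- (e *+ m)) c_gt; rewrite !addrK.
by apply: le_lt_trans (le_trans c_le x_ge) _; case/s_in/andP: xs.
Qed.

Lemma divisible_or_Z_group :
  (forall n, (0 < n)%N -> (forall x : G, n_divisible n x) \/ nmul_floor n) ->
  divisible_group G \/ Z_group G.
Proof.
move=> floors; case: (classic (divisible_group G)) => ndiv; [by left | right].
have [n nd] := not_all_ex_not _ _ ndiv.
have [n_gt0 /not_all_ex_not [x xn]] := imply_to_and _ _ nd.
have floor_n : nmul_floor n by case: (floors n n_gt0) => // all_div; case: xn.
have [e [e_gt0 e_min]] := nmul_floor_least_pos n_gt0 xn floor_n.
by split; [exact: regular_of_nmul_floor e_gt0 e_min floors | exists e].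
Qed.

End OrderedAbelianGroup.

Section Valuation.
Variables (K : fieldType) (G : porderZmodType) (v : K -> option G).
Hypotheses (hG : ordered_abelian_group G) (hv : is_valuation v).
Implicit Types x y : K.

(* Junk value [0] at [x = 0]. *)
Definition gval x : G := if v x is Some g then g else 0.

Lemma valuation0 : v 0 = None.
Proof. exact/(hv.1 0). Qed.

Lemma gvalE x : x != 0 -> v x = Some (gval x).
Proof.
by rewrite /gval; case e: (v x) => // /negP[]; apply/eqP/(hv.1 x).
Qed.

Lemma gval_surj (g : G) : exists2 x, x != 0 & gval x = g.
Proof.
have [x vx] := hv.2.2.2 g; exists x; last by rewrite /gval vx.
by apply: contraTneq isT => x0; move: vx; rewrite x0 valuation0.
Qed.

Lemma gvalM x y : x != 0 -> y != 0 -> gval (x * y) = gval x + gval y.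
Proof. by move=> x0 y0; rewrite {1}/gval hv.2.1 !gvalE. Qed.

Lemma gval1 : gval 1 = 0.
Proof.
by apply: (@addIr _ (gval 1)); rewrite -gvalM ?oner_neq0 // mulr1 add0r.
Qed.

Lemma gvalV x : x != 0 -> gval x^-1 = - gval x.
Proof.
move=> x0; apply: (@addIr _ (gval x)).
by rewrite -gvalM ?invr_eq0 // mulVf // gval1 addNr.
Qed.

Lemma gvalX x k : x != 0 -> gval (x ^+ k) = gval x *+ k.
Proof.
move=> x0; elim: k => [|k IH]; first by rewrite expr0 gval1.
by rewrite exprS gvalM ?expf_neq0 // IH mulrS.
Qed.

Lemma gvalN x : gval (- x) = gval x.
Proof.
have N1_0 : (-1 : K) != 0 by rewrite oppr_eq0 oner_neq0.
have N1_2 : gval (-1) + gval (-1) = 0 by rewrite -gvalM // mulrNN mulr1 gval1.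
have gval_N1 : gval (-1) = 0.
  apply/le_anti; case: (hG.1 0 (gval (-1))) => sgn;
  by have := oag_lerD2l hG (gval (-1)) sgn; rewrite addr0 N1_2 => ->; rewrite sgn.
case: (eqVneq x 0) => [->|x0]; first by rewrite oppr0.
by rewrite -mulN1r gvalM // gval_N1 add0r.
Qed.

Lemma gvalD_ge x y : x != 0 -> y != 0 -> x + y != 0 ->
  gval x <= gval (x + y) \/ gval y <= gval (x + y).
Proof. by move=> x0 y0 xy0; move: (hv.2.2.1 x y); rewrite !gvalE. Qed.

Lemma gvalD_lt x y : x != 0 -> y != 0 -> gval x < gval y ->
  x + y != 0 /\ gval (x + y) = gval x.
Proof.
move=> x0 y0 xy; have xy0 : x + y != 0.
  by apply: contraTneq xy => /eqP; rewrite addr_eq0 => /eqP->; rewrite gvalN ltxx.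
split=> //; apply/le_anti/andP; split; last first.
  by case: (gvalD_ge x0 y0 xy0) => // /(lt_le_trans xy)/ltW.
have Ny0 : - y != 0 by rewrite oppr_eq0.
case: (gvalD_ge xy0 Ny0); rewrite addrK // gvalN => /(lt_le_trans xy).
by rewrite ltxx.
Qed.

Lemma gval_ge0 x : x != 0 -> in_val_ring v x -> 0 <= gval x.
Proof. by move=> x0; rewrite /in_val_ring gvalE. Qed.

Lemma in_val_ring_gval x : 0 <= gval x -> in_val_ring v x.
Proof.
case: (eqVneq x 0) => [-> _|x0]; first by rewrite /in_val_ring valuation0.
by rewrite /in_val_ring gvalE.
Qed.

Lemma ole_gval x y : x != 0 -> y != 0 -> ole (v x) (v y) -> gval x <= gval y.
Proof. by move=> x0 y0; rewrite !gvalE. Qed.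

End Valuation.

Section PolynomialTerms.
Variables (K : fieldType) (n : nat).
Implicit Types (F H : mpoly K n) (a : 'I_n -> K).

Definition mconst (c : K) : mpoly K n := [:: (c, [tuple 0%N | i < n])].

Definition mvar (i : 'I_n) : mpoly K n :=
  [:: (1, [tuple nat_of_bool (j == i) | j < n])].

Definition mmul F H : mpoly K n :=
  [seq (p.1 * q.1, [tuple (tnth p.2 i + tnth q.2 i)%N | i < n]) | p <- F, q <- H].

Definition mpow F k : mpoly K n := iter k (mmul F) (mconst 1).

Lemma meval_cat F H a : meval (F ++ H) a = meval F a + meval H a.
Proof. by rewrite /meval big_cat. Qed.

Lemma meval_const c a : meval (mconst c) a = c.
Proof.
rewrite /meval big_seq1 /= big1 ?mulr1 // => i _.
by rewrite tnth_mktuple expr0.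
Qed.

Lemma meval_var i a : meval (mvar i) a = a i.
Proof.
rewrite /meval big_seq1 /= mul1r (bigD1 i) //= tnth_mktuple eqxx expr1.
by rewrite big1 ?mulr1 // => j ji; rewrite tnth_mktuple (negbTE ji) expr0.
Qed.

Lemma meval_mul F H a : meval (mmul F H) a = meval F a * meval H a.
Proof.
rewrite /meval /mmul big_allpairs_dep mulr_suml; apply: eq_bigr => p _.
rewrite mulr_sumr; apply: eq_bigr => q _ /=.
under eq_bigr do rewrite tnth_mktuple exprD.
by rewrite big_split /= mulrACA.
Qed.

Lemma meval_pow F k a : meval (mpow F k) a = meval F a ^+ k.
Proof.
elim: k => [|k IH]; first by rewrite meval_const expr0.
by rewrite /mpow iterS -/(mpow F k) meval_mul IH exprS.
Qed.

End PolynomialTerms.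

Section FloorPolynomial.
Variables (K : fieldType) (G : porderZmodType) (v : K -> option G).
Hypotheses (hG : ordered_abelian_group G) (hv : is_valuation v).
Variables (n : nat) (g th : G) (pi s : K).
Hypotheses (n_gt1 : (1 < n)%N) (g_gt0 : 0 < g) (g_ndiv : ~ n_divisible n g).
Hypotheses (th_ge0 : 0 <= th) (pi_neq0 : pi != 0) (s_neq0 : s != 0).
Hypotheses (gval_pi : gval v pi = g) (gval_s : gval v s = th).

Let n_gt0 : (0 < n)%N := ltnW n_gt1.

Definition floor_tail (z : K) : K := pi * ((s * pi)^-1 * z) ^+ n.

Definition floor_fun (x y : K) : K := x ^+ n + floor_tail (x ^+ n * y - s).

Lemma floor_tail0 : floor_tail 0 = 0.
Proof. by rewrite /floor_tail mulr0 expr0n (gtn_eqF n_gt0) mulr0. Qed.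

Lemma gval_floor_tail z : z != 0 ->
  floor_tail z != 0 /\ gval v (floor_tail z) = g + (gval v z - (th + g)) *+ n.
Proof.
move=> z0; have c0 : (s * pi)^-1 * z != 0 by rewrite mulf_neq0 ?invr_eq0 ?mulf_neq0.
split; first by rewrite mulf_neq0 ?expf_neq0.
rewrite gvalM ?expf_neq0 // gvalX // gvalM ?invr_eq0 ?mulf_neq0 //.
by rewrite gvalV ?mulf_neq0 // gvalM // gval_pi gval_s [_ + gval v z]addrC.
Qed.

Lemma gval_floor_fun_lt0 x y : in_val_ring v y ->
  (x != 0 -> th < gval v x *+ n) ->
  floor_fun x y != 0 /\ gval v (floor_fun x y) < 0.
Proof.
move=> y_int x_big.
(* [x^n y - s] has the value [th] of [s], so the tail has value [g - n g < 0]. *)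
have [z0 gval_z] : x ^+ n * y - s != 0 /\ gval v (x ^+ n * y - s) = th.
  have Ns0 : - s != 0 by rewrite oppr_eq0.
  case: (eqVneq (x ^+ n * y) 0) => [->|xy0]; first by rewrite sub0r (gvalN hG hv).
  have x0 : x != 0.
    by apply: contraNneq xy0 => ->; rewrite expr0n (gtn_eqF n_gt0) mul0r.
  have y0 : y != 0 by apply: contraNneq xy0 => ->; rewrite mulr0.
  have th_lt : gval v (- s) < gval v (x ^+ n * y).
    rewrite (gvalN hG hv) gval_s gvalM ?expf_neq0 // gvalX // -[th]addr0.
    exact: lt_le_trans (oag_ltrD2r hG _ (x_big x0))
                       (oag_lerD2l hG _ (gval_ge0 hv y0 y_int)).
  by rewrite addrC; have [-> ->] := gvalD_lt hG hv Ns0 xy0 th_lt; rewrite (gvalN hG hv).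
have [tail0 gval_tail] := gval_floor_tail z0.
have tail_lt0 : gval v (floor_tail (x ^+ n * y - s)) < 0.
  rewrite gval_tail gval_z opprD addNKr mulNrn -(oag_subr_gt0 hG) sub0r opprB.
  rewrite (oag_subr_gt0 hG) -(prednK n_gt0) mulrS -{1}[g]addr0.
  by apply/(oag_ltrD2l hG)/(oag_mulrn_gt0 hG); case: (n) n_gt1 => [|[]].
rewrite /floor_fun; set t := floor_tail _ in tail0 tail_lt0 *.
case: (eqVneq x 0) => [x0|x0].
  by rewrite x0 expr0n (gtn_eqF n_gt0) add0r; split.
have th_lt : gval v t < gval v (x ^+ n).
  by rewrite gvalX //; apply: lt_trans tail_lt0 (le_lt_trans th_ge0 (x_big x0)).
by rewrite addrC; have [-> ->] := gvalD_lt hG hv tail0 (expf_neq0 _ x0) th_lt.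
Qed.

(* The two summands of [floor_fun x y] have values [n * v(x)] and [g + n * _],
   which differ since [g] is not [n]-divisible. *)
Lemma gval_floor_fun_le x y : x != 0 ->
  floor_fun x y != 0 /\ gval v (floor_fun x y) <= gval v x *+ n.
Proof.
move=> x0; have xn0 : x ^+ n != 0 by rewrite expf_neq0.
rewrite /floor_fun -(gvalX hv _ x0); case: (eqVneq (x ^+ n * y - s) 0) => [->|z0].
  by rewrite floor_tail0 addr0.
have [tail0 gval_tail] := gval_floor_tail z0.
case: (oag_ltgtP hG (gval v (x ^+ n)) (gval v (floor_tail (x ^+ n * y - s)))).
- by move=> lt; have [-> ->] := gvalD_lt hG hv xn0 tail0 lt.
- rewrite gval_tail gvalX // => eq; case: g_ndiv.
  by exists (gval v x - (gval v (x ^+ n * y - s) - (th + g))); rewrite mulrnBl eq addrK.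
- move=> gt; rewrite addrC; have [-> ->] := gvalD_lt hG hv tail0 xn0 gt.
  by split=> //; apply: ltW.
Qed.

Lemma floor_fun_1s : floor_fun 1 s = 1.
Proof. by rewrite /floor_fun expr1n mul1r subrr floor_tail0 addr0. Qed.

Lemma floor_fun_divXn x : x != 0 -> floor_fun x (s / x ^+ n) = x ^+ n.
Proof.
by move=> x0; rewrite /floor_fun mulrC divfK ?expf_neq0 // subrr floor_tail0 addr0.
Qed.

Definition floor_poly : mpoly K 2 :=
  let X := mpow (mvar K ord0) n in
  X ++ mmul (mconst 2 pi)
    (mpow (mmul (mconst 2 (s * pi)^-1) (mmul X (mvar K ord_max) ++ mconst 2 (- s))) n).

Lemma meval_floor_poly a : meval floor_poly a = floor_fun (a ord0) (a ord_max).
Proof.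
by rewrite /floor_poly !(meval_cat, meval_mul, meval_pow, meval_const, meval_var).
Qed.

Lemma nmul_floor_of_maximizer (a : 'I_2 -> K) :
  (forall i, in_val_ring v (a i)) ->
  (forall b, (forall i, in_val_ring v (b i)) ->
     ole (v (meval floor_poly b)) (v (meval floor_poly a))) ->
  exists a1 : G, [/\ 0 <= a1, a1 *+ n <= th &
    forall b : G, 0 <= b -> b *+ n <= th -> b *+ n <= a1 *+ n].
Proof.
move=> a_int a_max; rewrite meval_floor_poly in a_max.
set E := floor_fun _ _ in a_max.
have le_E x y : in_val_ring v x -> in_val_ring v y -> ole (v (floor_fun x y)) (v E).
  move=> x_int y_int; pose b (i : 'I_2) := if i == ord0 then x else y.
  by have := a_max b; rewrite meval_floor_poly; apply=> i; rewrite /b; case: ifP.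
have E0 : E != 0.
  case: (eqVneq (a ord0) 0) => a0; last first.
    by case: (gval_floor_fun_le (a ord_max) a0).
  have a_big : a ord0 != 0 -> th < gval v (a ord0) *+ n by rewrite a0 eqxx.
  by case: (gval_floor_fun_lt0 (a_int ord_max) a_big).
have E_ge0 : 0 <= gval v E.
  have s_int : in_val_ring v s by apply: (in_val_ring_gval hv); rewrite gval_s.
  have one_int : in_val_ring v 1 by apply: (in_val_ring_gval hv); rewrite (gval1 hv).
  rewrite -(gval1 hv); apply: (ole_gval hv (oner_neq0 _) E0).
  by have := le_E _ _ one_int s_int; rewrite floor_fun_1s.
have /andP[a0 a0_le] : (a ord0 != 0) && (gval v (a ord0) *+ n <= th).
  apply/negPn/negP => /nandP a_big.
  have x_big : a ord0 != 0 -> th < gval v (a ord0) *+ n.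
    by move=> a0; case: a_big; rewrite ?a0 // (oag_ltNge hG).
  have [_] := gval_floor_fun_lt0 (a_int ord_max) x_big.
  by rewrite -/E => /(le_lt_trans E_ge0); rewrite ltxx.
exists (gval v (a ord0)); split=> //; first exact: gval_ge0 (a_int ord0).
move=> b b_ge0 b_le; have [x x0 gval_x] := gval_surj hv b; subst b.
have xn0 : x ^+ n != 0 by rewrite expf_neq0.
have y_int : in_val_ring v (s / x ^+ n).
  apply: (in_val_ring_gval hv); rewrite gvalM ?invr_eq0 // gvalV // gvalX // gval_s.
  by rewrite (oag_subr_ge0 hG).
have := le_E _ _ (in_val_ring_gval hv b_ge0) y_int.
rewrite floor_fun_divXn // => /(ole_gval hv xn0 E0); rewrite gvalX // => le_xE.
by apply: le_trans le_xE _; case: (gval_floor_fun_le (a ord_max) a0).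
Qed.

End FloorPolynomial.

Lemma extremal_nmul_floor (K : fieldType) (G : porderZmodType) (v : K -> option G)
    n (x : G) :
  ordered_abelian_group G -> is_valuation v -> extremal v ->
  (0 < n)%N -> ~ n_divisible n x -> nmul_floor G n.
Proof.
move=> hG hv ext n_gt0 xn; have [g g_gt0 gn] := exists_pos_ndiv hG xn.
have n_gt1 : (1 < n)%N.
  by case: n n_gt0 {xn} gn => [|[|//]] // _ []; exists g; rewrite mulr1n.
have [pi pi0 gval_pi] := gval_surj hv g.
move=> th th_ge0; have [s s0 gval_s] := gval_surj hv th.
have [a [a_int a_max]] := ext 2%N isT (floor_poly n pi s).
exact: (nmul_floor_of_maximizer hG hv n_gt1 g_gt0 gn th_ge0 pi0 s0 gval_pi gval_s
  a_int a_max).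
Qed.

Theorem theorem3p6 (K : fieldType) (G : porderZmodType) (v : K -> option G) :
  ordered_abelian_group G -> is_valuation v -> extremal v ->
  divisible_group G \/ Z_group G.
Proof.
move=> hG hv ext; apply: (divisible_or_Z_group hG) => n n_gt0.
case: (classic (forall x : G, n_divisible n x)) => [|/not_all_ex_not[x xn]].
  by left.
by right; apply: extremal_nmul_floor hG hv ext n_gt0 xn.
Qed.
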